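(* Let $m\ge2$, $G=CK(2m-1)$, and let $B$ be a set of edges of Class A with parameters $\alpha,\delta$ (so that $B$ contains all edges of the boundary path $\langle\alpha,\alpha+1,\dots,m-\delta\rangle$). Let $F$ be a simple Hamiltonian path of $G$. If some edge of $F$ connects two vertices of the path $\langle\alpha,\alpha+1,\dots,m-\delta\rangle$, then $F$ and $B$ have an edge in common.
   Context: $CK(2m-1)$ is the complete convex geometric graph on $2m-1$ points in convex position, labelled clockwise $0,\dots,2m-2$ (elements of $\mathbb{Z}_{2m-1}$; indices mod $2m-1$), with all segments as edges. A simple Hamiltonian path is a path through all vertices whose edges pairwise do not cross. Class A: sets consisting of the following edges, for integers $\alpha,\delta\ge0$ with $\alpha+\delta\le m-2$: (1) all edges of the boundary path $\langle\alpha,\alpha+1,\dots,m-\delta\rangle$; (2) the edges $[i-1-\epsilon_i,\,i+\epsilon_i]$, $1\le i\le\alpha$, with $\epsilon_1>\dots>\epsilon_\alpha>0$ and $\alpha-i+1\le\epsilon_i\le m-\delta-i-1$; (3) the edges $[m-j-\xi_j,\,m-j+1+\xi_j]$, $1\le j\le\delta$, with $\xi_1>\dots>\xi_\delta>0$ and $\delta+1-j\le\xi_j\le m-j-\alpha-1$; and in addition $\epsilon_1+\xi_1\le m-2$ (when $\alpha,\delta>0$). *)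

(* Complete convex geometric graph CK(n), n = 2m-1, vertices
   labelled 0..n-1 clockwise; an edge is an unordered pair of labels,
   represented by an ordered pair (a,b) up to swapping. *)
From mathcomp Require Import all_boot all_order all_algebra.
Set Implicit Arguments. Unset Strict Implicit. Unset Printing Implicit Defensive.

Local Open Scope ring_scope.
Definition vmod (n : nat) (z : int) : nat := `|(z %% n%:Z)%Z|%N.

Definition same_edge (e f : nat * nat) : bool :=
  ((e.1 == f.1) && (e.2 == f.2)) || ((e.1 == f.2) && (e.2 == f.1)).

(* x lies strictly inside one of the two boundary arcs determined by a,b *)
Definition strictly_between (a b x : nat) : bool := (minn a b < x < maxn a b)%N.

(* two segments between points in convex position cross iff their four
   endpoints are distinct and interleave in the cyclic order *)
Definition cross (e f : nat * nat) : bool :=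
  let: (a, b) := e in let: (c, d) := f in
  [&& uniq [:: a; b; c; d] &
      strictly_between a b c != strictly_between a b d].

Definition path_edges (s : seq nat) : seq (nat * nat) := zip s (behead s).

Definition simple_ham_path (n : nat) (F : seq nat) : Prop :=
  perm_eq F (iota 0 n) /\
  (forall e f, e \in path_edges F -> f \in path_edges F -> ~~ cross e f).

Definition classA_params (m alpha delta : nat) (eps xi : nat -> nat) : Prop :=
  (alpha + delta <= m - 2)%N /\
  [/\ (forall i j, (1 <= i)%N -> (i < j)%N -> (j <= alpha)%N -> (eps j < eps i)%N),
      (forall i, (1 <= i <= alpha)%N ->
          [/\ (0 < eps i)%N, (alpha - i + 1 <= eps i)%N & (eps i <= m - delta - i - 1)%N]),
      (forall i j, (1 <= i)%N -> (i < j)%N -> (j <= delta)%N -> (xi j < xi i)%N),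
      (forall j, (1 <= j <= delta)%N ->
          [/\ (0 < xi j)%N, (delta + 1 - j <= xi j)%N & (xi j <= m - j - alpha - 1)%N]) &
      ((0 < alpha)%N -> (0 < delta)%N -> (eps 1 + xi 1 <= m - 2)%N)].

Definition classA_edges (m alpha delta : nat) (eps xi : nat -> nat) : seq (nat * nat) :=
  let n := (2 * m - 1)%N in
  [seq (k, k.+1) | k <- iota alpha (m - delta - alpha)] ++
  [seq (vmod n (i%:Z - 1 - (eps i)%:Z), vmod n (i%:Z + (eps i)%:Z)) | i <- iota 1 alpha] ++
  [seq (vmod n (m%:Z - j%:Z - (xi j)%:Z), vmod n (m%:Z - j%:Z + 1 + (xi j)%:Z))
     | j <- iota 1 delta].

(* If an edge {x, y} of F with x < y joins two vertices of the boundary path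
   and y > x + 1, then the vertex x + 1 lies on F and has a neighbour t on F.
   The edge {x + 1, t} may not cross {x, y}, so t lies in [x, y] and {x + 1, t}
   is a strictly shorter edge of F spanning a subinterval of [x, y].  Iterating
   yields an edge {k, k + 1} of F inside the boundary path, and every such edge
   belongs to the Class A set B. *)
From mathcomp Require Import all_boot all_order all_algebra zify.
Set Implicit Arguments. Unset Strict Implicit. Unset Printing Implicit Defensive.

Lemma crossCl a b f : cross (a, b) f = cross (b, a) f.
Proof.
case: f => c d; rewrite /cross /strictly_between minnC maxnC.
by congr (_ && _); apply: perm_uniq; rewrite (perm_catCA [:: a] [:: b]).
Qed.

Lemma crossCr e c d : cross e (c, d) = cross e (d, c).
Proof.
case: e => a b; rewrite /cross eq_sym; congr (_ && _); apply: perm_uniq.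
by rewrite -[[:: a, b, c & _]]/([:: a; b] ++ [:: c] ++ [:: d]) perm_cat2l perm_catC.
Qed.

Lemma cross_inside_outside x y c d :
  strictly_between x y c -> ~~ (minn x y <= d <= maxn x y) -> cross (x, y) (c, d).
Proof.
rewrite /cross /strictly_between => /andP [xc cy] dout.
have -> : (minn x y < d < maxn x y) = false by apply: contraNF dout => /andP []; lia.
by rewrite xc cy /= !inE !andbT; lia.
Qed.

Definition path_adj (s : seq nat) (u v : nat) : bool :=
  ((u, v) \in path_edges s) || ((v, u) \in path_edges s).

Lemma path_adjC s u v : path_adj s u v = path_adj s v u.
Proof. by rewrite /path_adj orbC. Qed.

Lemma path_adj_cons2 u v s x y :
  path_adj [:: u, v & s] x y = [|| (x == u) && (y == v), (x == v) && (y == u)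
                                 | path_adj (v :: s) x y].
Proof.
by rewrite /path_adj /path_edges /= !in_cons !xpair_eqE orbACA -orbA [(y == u) && _]andbC.
Qed.

Lemma path_adj_same_edge s u v :
  path_adj s u v -> exists2 e, e \in path_edges s & same_edge e (u, v).
Proof.
by case/orP => uv; [exists (u, v) | exists (v, u)]; rewrite // /same_edge !eqxx ?orbT.
Qed.

Lemma path_adj_neq s u v : uniq s -> path_adj s u v -> u != v.
Proof.
elim: s => [//|w [//|w' s] IHs] /= /andP [ws uniq_s].
rewrite path_adj_cons2 => /or3P [/andP [/eqP -> /eqP ->] | /andP [/eqP -> /eqP ->] |];
  last exact: IHs.
- by apply: contraNneq ws => ->; rewrite mem_head.
- by apply: contraNneq ws => <-; rewrite mem_head.
Qed.

Lemma path_adj_exists s u : u \in s -> (1 < size s)%N -> exists v, path_adj s u v.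
Proof.
elim: s => [//|w [//|w' s] IHs]; rewrite in_cons => /predU1P [-> _|us _].
  by exists w'; rewrite path_adj_cons2 !eqxx.
case: s IHs us => [|w'' s] IHs us.
  by exists w; move: us; rewrite mem_seq1 => /eqP ->; rewrite path_adjC path_adj_cons2 !eqxx.
by have [v uv] := IHs us erefl; exists v; rewrite path_adj_cons2 uv !orbT.
Qed.

Section NoncrossingPath.

Variable s : seq nat.
Hypothesis uniq_s : uniq s.
Hypothesis size_s : (1 < size s)%N.
Hypothesis noncrossing_s :
  forall e f, e \in path_edges s -> f \in path_edges s -> ~~ cross e f.

Lemma path_adj_noncrossing x y c d :
  path_adj s x y -> path_adj s c d -> ~~ cross (x, y) (c, d).
Proof.
case/orP => xy /orP [] cd; [| rewrite crossCr | rewrite crossCl | rewrite crossCl crossCr];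
  exact: noncrossing_s.
Qed.

Lemma path_adj_unit_between x y :
  (x < y)%N -> path_adj s x y -> (forall z, (x <= z <= y)%N -> z \in s) ->
  exists2 k, (x <= k < y)%N & path_adj s k k.+1.
Proof.
move=> xy adj_xy cover; have [n] := ubnP (y - x).
elim: n => // n IHn in x y xy adj_xy cover *; move=> dist_lt.
have [y_eq|y_neq] := eqVneq y x.+1; first by subst y; exists x; rewrite ?leqnn.
have [t adj_t] : exists t, path_adj s x.+1 t.
  by apply: path_adj_exists size_s; apply: cover; lia.
have t_in : (x <= t <= y)%N.
  apply: contraNT (path_adj_noncrossing adj_xy adj_t) => t_out.
  by apply: cross_inside_outside; rewrite /strictly_between; lia.
have cover_sub u v : (x <= u)%N -> (v <= y)%N -> forall z, (u <= z <= v)%N -> z \in s.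
  by move=> xu vy z uzv; apply: cover; lia.
have [tx|xt|tx] := ltngtP t x.+1.
- rewrite path_adjC in adj_t; have [||k k_in adj_k] := IHn t x.+1 tx adj_t.
  + by apply: cover_sub; lia.
  + lia.
  + by exists k => //; lia.
- have [||k k_in adj_k] := IHn x.+1 t xt adj_t.
  + by apply: cover_sub; lia.
  + lia.
  + by exists k => //; lia.
- by move: (path_adj_neq uniq_s adj_t); rewrite tx eqxx.
Qed.

End NoncrossingPath.

Lemma classA_boundary_edge m alpha delta eps xi k :
  (alpha <= k < m - delta)%N -> (k, k.+1) \in classA_edges m alpha delta eps xi.
Proof.
move=> k_in; rewrite mem_cat; apply/orP; left.
by apply: (map_f (fun k => (k, k.+1))); rewrite mem_iota; lia.
Qed.

Theorem mainTheorem11 (m alpha delta : nat) (eps xi : nat -> nat) (F : seq nat) :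
  (2 <= m)%N ->
  classA_params m alpha delta eps xi ->
  simple_ham_path (2 * m - 1) F ->
  (exists2 e, e \in path_edges F &
     [&& (alpha <= e.1 <= m - delta)%N & (alpha <= e.2 <= m - delta)%N]) ->
  exists e f, [/\ e \in path_edges F, f \in classA_edges m alpha delta eps xi
                & same_edge e f].
Proof.
move=> m_ge2 _ [permF noncrossF] [[x y] xyF /andP /= [x_in y_in]].
have uniqF : uniq F by rewrite (perm_uniq permF) iota_uniq.
have sizeF : (1 < size F)%N by rewrite (perm_size permF) size_iota; lia.
have coverF z : (alpha <= z <= m - delta)%N -> z \in F.
  by move=> z_in; rewrite (perm_mem permF) mem_iota; lia.
have {xyF} adj_xy : path_adj F x y by rewrite /path_adj xyF.
have [k k_in adj_k] : exists2 k, (alpha <= k < m - delta)%N & path_adj F k k.+1.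
  wlog ltxy : x y x_in y_in adj_xy / (x < y)%N.
    move=> gen; have := path_adj_neq uniqF adj_xy.
    case: ltngtP => // [xy|yx] _; first exact: gen xy.
    by apply: gen yx; rewrite // path_adjC.
  have cover_xy z : (x <= z <= y)%N -> z \in F by move=> z_in; apply: coverF; lia.
  have [k k_in adj_k] := path_adj_unit_between uniqF sizeF noncrossF ltxy adj_xy cover_xy.
  by exists k => //; lia.
have [e eF same_e] := path_adj_same_edge adj_k.
by exists e, (k, k.+1); split; rewrite ?classA_boundary_edge.
Qed.
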